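(* Let $\mathcal{L}=(\mathrm{Fm},\vdash)$ be a logic and $N\subseteq\mathrm{Fm}\times\mathrm{Fm}$ a normative system, and let $P^c_N=(\mathrm{Fm}\times\mathrm{Fm})\setminus P_N$. 1. If $\bot_P$ and $\top_W$ hold, $P^c_N$ is closed under $(\top)^{\rhd}$ iff $(\top,\psi)\in N$ for some $\psi\in\mathrm{Fm}$. 2. If $\bot_P$ and $\top_W$ hold and $N$ is closed under (WO), then $N$ is closed under $(\top)$ iff $P^c_N$ is closed under $(\top)^{\rhd}$. 3. If $\bot_P$ and $\top_W$ hold, $P^c_N$ is closed under $(\bot)^{\rhd}$ iff $(\bot,\psi)\in N$ for some $\psi$ with $Cn(\psi)=\mathrm{Fm}$. 4. If $\bot_P$ and $\top_W$ hold and $N$ is closed under (WO), then $N$ is closed under $(\bot)$ iff $P^c_N$ is closed under $(\bot)^{\rhd}$. 5. $P^c_N$ is closed under $(\mathrm{WO})^{\rhd}$. 6. If $N$ is closed under (SI), then $P^c_N$ is closed under $(\mathrm{SI})^{\rhd}$. 7. If $\bot_P,\top_P,\neg_I,\neg_A,\neg_P$ hold and $N$ is closed under (WO), then $N$ is closed under (SI) iff $P^c_N$ is closed under $(\mathrm{SI})^{\rhd}$. 8. If $\wedge_P$ and $\vee_S$ hold and $N$ is closed under (AND), then $P^c_N$ is closed under $(\mathrm{AND})^{\rhd}$. 9. If $\bot_P,\top_P,\neg_I,\neg_A,\neg_P$ hold and $N$ is closed under (WO), then $N$ is closed under (AND) iff $P^c_N$ is closed under $(\mathrm{AND})^{\rhd}$.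 10. If $\vee_S$ holds and $N$ is closed under (OR) and (WO), then $P^c_N$ is closed under $(\mathrm{OR})^{\rhd}$. 11. If $\bot_P,\top_P,\neg_I,\neg_A,\neg_P$ hold and $N$ is closed under (WO), then $N$ is closed under (OR) iff $P^c_N$ is closed under $(\mathrm{OR})^{\rhd}$. 12. If $N$ is closed under (CT), then $P^c_N$ is closed under $(\mathrm{CT})^{\rhd}$. 13. If $\bot_P,\top_P,\neg_I,\neg_A,\neg_P$ hold and $N$ is closed under (WO), then $N$ is closed under (CT) iff $P^c_N$ is closed under $(\mathrm{CT})^{\rhd}$.
   Context: A logic $\mathcal{L}=(\mathrm{Fm},\vdash)$: $\mathrm{Fm}$ a formula algebra, $\vdash\subseteq\mathcal{P}(\mathrm{Fm})\times\mathrm{Fm}$ a consequence relation (reflexive, monotone, cut); $Cn(\Gamma)=\{\psi\mid\Gamma\vdash\psi\}$, $Cn(\varphi)=Cn(\{\varphi\})$, $Cn(\Gamma,\varphi)=Cn(\Gamma\cup\{\varphi\})$, $Cn(\varphi,\psi)=Cn(\{\varphi,\psi\})$; $\varphi\vdash\psi$ means $\{\varphi\}\vdash\psi$. Metalogical properties (each asserts existence of a term, then denoted by the symbol): $\wedge_P$: $Cn(\varphi\wedge\psi)=Cn(\{\varphi,\psi\})$; $\vee_P$: $Cn(\varphi\vee\psi)=Cn(\varphi)\cap Cn(\psi)$; $\vee_S$: $Cn(\Gamma,\varphi\vee\psi)=Cn(\Gamma,\varphi)\cap Cn(\Gamma,\psi)$ for all $\Gamma$; $\bot_P$: $Cn(\bot)=\mathrm{Fm}$;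 $\top_W$: $\top\in Cn(\varphi)$ for all $\varphi$; $\top_P$: $Cn(\top)=Cn(\varnothing)$; $\neg_W$: unary $\neg$ with $\psi\in Cn(\varphi)\Rightarrow\neg\varphi\in Cn(\neg\psi)$. For a term $\neg$ with $\neg_W$ (asserting the following includes $\neg_W$): $\neg_I$: $Cn(\neg\neg\varphi)=Cn(\varphi)$; $\neg_A$: $Cn(\varphi,\neg\varphi)=\mathrm{Fm}$; $\neg_P$: $\wedge_P$ holds and $\neg\psi\in Cn(\varphi,\neg(\varphi\wedge\psi))$. Standing convention: a rule mentioning $\wedge,\vee,\top,\bot$ is only considered when the logic has the corresponding property ($\wedge_P$, $\vee_P$, $\top_W$, $\bot_P$) with that term. A normative system is $N\subseteq\mathrm{Fm}\times\mathrm{Fm}$. Closure rules for $N$ (closed under a rule = the conclusion belongs to $N$ whenever the premises do): $(\top)$: $(\top,\top)\in N$; $(\bot)$: $(\bot,\bot)\in N$; (SI): $(\alpha,\varphi)\in N,\ \beta\vdash\alpha\Rightarrow(\beta,\varphi)\in N$; (WO): $(\alpha,\varphi)\in N,\ \varphi\vdash\psi\Rightarrow(\alpha,\psi)\in N$; (AND): $(\alpha,\varphi),(\alpha,\psi)\in N\Rightarrow(\alpha,\varphi\wedge\psi)\in N$; (OR): $(\alpha,\varphi),(\beta,\varphi)\in N\Rightarrow(\alpha\vee\beta,\varphi)\in N$; (CT): $(\alpha,\varphi)\in N,(\alpha\wedge\varphi,\psi)\in N\Rightarrow(\alpha,\psi)\in N$. $P_N=\{(\alpha,\varphi)\mid\forall\psi((\alpha,\psi)\in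 N\Rightarrow Cn(\varphi,\psi)\neq\mathrm{Fm})\}$. Closure rules for a relation $R\subseteq\mathrm{Fm}\times\mathrm{Fm}$ (here $R=P^c_N$): $(\top)^{\rhd}$: $(\top,\bot)\in R$; $(\bot)^{\rhd}$: $(\bot,\top)\in R$; $(\mathrm{SI})^{\rhd}$: $(\beta,\varphi)\in R,\ \alpha\vdash\beta\Rightarrow(\alpha,\varphi)\in R$; $(\mathrm{WO})^{\rhd}$: $(\alpha,\psi)\in R,\ \varphi\vdash\psi\Rightarrow(\alpha,\varphi)\in R$; $(\mathrm{AND})^{\rhd}$: $(\alpha,\varphi),(\alpha,\psi)\in R\Rightarrow(\alpha,\varphi\vee\psi)\in R$; $(\mathrm{OR})^{\rhd}$: $(\alpha,\varphi),(\beta,\varphi)\in R\Rightarrow(\alpha\vee\beta,\varphi)\in R$; $(\mathrm{CT})^{\rhd}$: $(\alpha,\varphi)\in N,\ (\alpha\wedge\varphi,\psi)\in R\Rightarrow(\alpha,\psi)\in R$. *)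

Set Implicit Arguments.

Section Defs.
Variable Fm : Type.

Definition fset := Fm -> Prop.
Definition set_empty : fset := fun _ => False.
Definition set1 (x : Fm) : fset := fun z => z = x.
Definition set2 (x y : Fm) : fset := fun z => z = x \/ z = y.
Definition setU1 (G : fset) (x : Fm) : fset := fun z => G z \/ z = x.

Variable vdash : fset -> Fm -> Prop.

Definition Cn (G : fset) : fset := fun psi => vdash G psi.
Definition same_Cn (G D : fset) : Prop := forall x, Cn G x <-> Cn D x.
Definition Cn_full (G : fset) : Prop := forall x, Cn G x.

Definition is_logic : Prop :=
  (forall (G : fset) phi, G phi -> vdash G phi) /\
  (forall (G D : fset) phi, (forall x, G x -> D x) -> vdash G phi -> vdash D phi) /\
  (forall (G D : fset) psi, (forall phi, D phi -> vdash G phi) -> vdash D psi -> vdash G psi).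

Definition andP (conj : Fm -> Fm -> Fm) : Prop :=
  forall phi psi, same_Cn (set1 (conj phi psi)) (set2 phi psi).
Definition orP (disj : Fm -> Fm -> Fm) : Prop :=
  forall phi psi x, Cn (set1 (disj phi psi)) x <-> (Cn (set1 phi) x /\ Cn (set1 psi) x).
Definition orS (disj : Fm -> Fm -> Fm) : Prop :=
  forall (G : fset) phi psi x,
    Cn (setU1 G (disj phi psi)) x <-> (Cn (setU1 G phi) x /\ Cn (setU1 G psi) x).
Definition botP (bot : Fm) : Prop := Cn_full (set1 bot).
Definition topW (top : Fm) : Prop := forall phi, Cn (set1 phi) top.
Definition topP (top : Fm) : Prop := same_Cn (set1 top) set_empty.
Definition negW (neg : Fm -> Fm) : Prop :=
  forall phi psi, Cn (set1 phi) psi -> Cn (set1 (neg psi)) (neg phi).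
Definition negI (neg : Fm -> Fm) : Prop :=
  negW neg /\ forall phi, same_Cn (set1 (neg (neg phi))) (set1 phi).
Definition negA (neg : Fm -> Fm) : Prop :=
  negW neg /\ forall phi, Cn_full (set2 phi (neg phi)).
Definition negPP (conj : Fm -> Fm -> Fm) (neg : Fm -> Fm) : Prop :=
  negW neg /\ andP conj /\
  forall phi psi, Cn (set2 phi (neg (conj phi psi))) (neg psi).

Definition nsys := Fm -> Fm -> Prop.

Definition cl_top (top : Fm) (N : nsys) : Prop := N top top.
Definition cl_bot (bot : Fm) (N : nsys) : Prop := N bot bot.
Definition cl_SI (N : nsys) : Prop :=
  forall a b phi, N a phi -> vdash (set1 b) a -> N b phi.
Definition cl_WO (N : nsys) : Prop :=
  forall a phi psi, N a phi -> vdash (set1 phi) psi -> N a psi.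
Definition cl_AND (conj : Fm -> Fm -> Fm) (N : nsys) : Prop :=
  forall a phi psi, N a phi -> N a psi -> N a (conj phi psi).
Definition cl_OR (disj : Fm -> Fm -> Fm) (N : nsys) : Prop :=
  forall a b phi, N a phi -> N b phi -> N (disj a b) phi.
Definition cl_CT (conj : Fm -> Fm -> Fm) (N : nsys) : Prop :=
  forall a phi psi, N a phi -> N (conj a phi) psi -> N a psi.

Definition PN (N : nsys) : nsys :=
  fun a phi => forall psi, N a psi -> ~ Cn_full (set2 phi psi).
Definition PNc (N : nsys) : nsys := fun a phi => ~ PN N a phi.

Definition clR_top (top bot : Fm) (R : nsys) : Prop := R top bot.
Definition clR_bot (bot top : Fm) (R : nsys) : Prop := R bot top.
Definition clR_SI (R : nsys) : Prop :=
  forall a b phi, R b phi -> vdash (set1 a) b -> R a phi.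
Definition clR_WO (R : nsys) : Prop :=
  forall a phi psi, R a psi -> vdash (set1 phi) psi -> R a phi.
Definition clR_AND (disj : Fm -> Fm -> Fm) (R : nsys) : Prop :=
  forall a phi psi, R a phi -> R a psi -> R a (disj phi psi).
Definition clR_OR (disj : Fm -> Fm -> Fm) (R : nsys) : Prop :=
  forall a b phi, R a phi -> R b phi -> R (disj a b) phi.
Definition clR_CT (conj : Fm -> Fm -> Fm) (N R : nsys) : Prop :=
  forall a phi psi, N a phi -> R (conj a phi) psi -> R a psi.

End Defs.

(* A pair (a, φ) lies outside P_N exactly when some obligation ψ of a is
   inconsistent with φ; every closure rule of N transfers to P^c_N by carrying
   this witness ψ along.  For the converses, a negation satisfying ¬_I, ¬_A,
   ¬_P and ⊤_P makes χ inconsistent with ¬φ precisely when χ ⊢ φ, so under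
   (WO) the pair (a, φ) is in P^c_N iff (a, ¬φ) ∈ N.  Negation thus
   translates each rule for P^c_N back into the corresponding rule for N,
   De Morgan's laws exchanging (AND) and (AND)^▷. *)

From Stdlib Require Import Classical.

Set Implicit Arguments.

Section Consequence.
Variable Fm : Type.
Variable vdash : fset Fm -> Fm -> Prop.
Hypothesis HL : is_logic vdash.

Lemma vdash_refl G phi : G phi -> vdash G phi.
Proof. apply (proj1 HL). Qed.

Lemma vdash_mono (G D : fset Fm) phi :
  (forall x, G x -> D x) -> vdash G phi -> vdash D phi.
Proof. apply (proj1 (proj2 HL)). Qed.

Lemma vdash_cut (G D : fset Fm) psi :
  (forall phi, D phi -> vdash G phi) -> vdash D psi -> vdash G psi.
Proof. apply (proj2 (proj2 HL)). Qed.

Lemma vdash_cut1 G a x : vdash G a -> vdash (set1 a) x -> vdash G x.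
Proof. intros Ha. apply vdash_cut. intros p ->. exact Ha. Qed.

Lemma vdash_cut2 G a b x :
  vdash G a -> vdash G b -> vdash (set2 a b) x -> vdash G x.
Proof. intros Ha Hb. apply vdash_cut. intros p [-> | ->]; assumption. Qed.

Lemma vdash_set1 a : vdash (set1 a) a.
Proof. apply vdash_refl. reflexivity. Qed.

Lemma vdash_set2l a b : vdash (set2 a b) a.
Proof. apply vdash_refl. left; reflexivity. Qed.

Lemma vdash_set2r a b : vdash (set2 a b) b.
Proof. apply vdash_refl. right; reflexivity. Qed.

Lemma vdash_set2C a b x : vdash (set2 a b) x -> vdash (set2 b a) x.
Proof. apply vdash_mono. intros z [-> | ->]; [right | left]; reflexivity. Qed.

Lemma vdash_setU1_set1 g p x : vdash (setU1 (set1 g) p) x <-> vdash (set2 g p) x.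
Proof. split; apply vdash_mono; intros z [-> | ->]; now (left + right). Qed.

Lemma Cn_full_cut2 G a b :
  vdash G a -> vdash G b -> Cn_full vdash (set2 a b) -> Cn_full vdash G.
Proof. intros Ha Hb Hab x. exact (vdash_cut2 Ha Hb (Hab x)). Qed.

Lemma Cn_full_set2C a b : Cn_full vdash (set2 a b) -> Cn_full vdash (set2 b a).
Proof. intros H x. apply vdash_set2C, H. Qed.

Section Disjunction.
Variable disj : Fm -> Fm -> Fm.
Hypothesis Hdisj : orS vdash disj.

Lemma orS_intro p q : vdash (set1 p) (disj p q) /\ vdash (set1 q) (disj p q).
Proof.
  assert (Hempty : forall r x, vdash (setU1 (@set_empty Fm) r) x -> vdash (set1 r) x).
  { intros r x. apply vdash_mono. intros z [[] | ->]. reflexivity. }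
  destruct (proj1 (Hdisj (@set_empty Fm) p q (disj p q))) as [Hp Hq].
  - apply vdash_refl. right; reflexivity.
  - split; apply Hempty; assumption.
Qed.

Lemma Cn_full_disj g p q : Cn_full vdash (set2 g p) -> Cn_full vdash (set2 g q) ->
  Cn_full vdash (set2 g (disj p q)).
Proof.
  intros Hp Hq x. apply vdash_setU1_set1, Hdisj.
  split; apply vdash_setU1_set1; [apply Hp | apply Hq].
Qed.

End Disjunction.

Section Negation.
Variables (top : Fm) (neg : Fm -> Fm) (conj disj : Fm -> Fm -> Fm).

Lemma neg_swap : negI vdash neg -> forall phi psi,
  vdash (set1 phi) (neg psi) -> vdash (set1 psi) (neg phi).
Proof.
  intros [Hcontra Hnn] phi psi H.
  apply (vdash_cut1 (proj1 (Hnn psi _) (vdash_set1 (neg (neg psi))))).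
  exact (Hcontra _ _ H).
Qed.

Lemma neg_swap_elim : negI vdash neg -> forall phi psi,
  vdash (set1 (neg phi)) psi -> vdash (set1 (neg psi)) phi.
Proof.
  intros [Hcontra Hnn] phi psi H.
  apply (vdash_cut1 (Hcontra _ _ H)), (Hnn phi), vdash_set1.
Qed.

Lemma conj_neg_derives_neg_disj : negI vdash neg -> andP vdash conj ->
  orP vdash disj -> forall phi psi,
  vdash (set1 (conj (neg phi) (neg psi))) (neg (disj phi psi)).
Proof.
  intros HnI Hconj Hdisj phi psi.
  apply neg_swap; [exact HnI |]. apply Hdisj. split; apply neg_swap; try exact HnI;
    apply (Hconj (neg phi) (neg psi)); [apply vdash_set2l | apply vdash_set2r].
Qed.

Lemma neg_conj_derives_disj_neg : negI vdash neg -> andP vdash conj ->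
  orP vdash disj -> forall phi psi,
  vdash (set1 (neg (conj phi psi))) (disj (neg phi) (neg psi)).
Proof.
  intros HnI Hconj Hdisj phi psi.
  apply neg_swap_elim; [exact HnI |].
  destruct (proj1 (Hdisj (neg phi) (neg psi) _) (vdash_set1 _)) as [Hl Hr].
  apply (vdash_cut2 (neg_swap_elim HnI Hl) (neg_swap_elim HnI Hr)).
  apply (Hconj phi psi), vdash_set1.
Qed.

(* The role of ⊤_P: a formula derived from ⊤ is derived from anything, which
   lets ¬_P discharge the conjunction χ ∧ ¬φ. *)
Lemma inconsistent_neg_iff : topP vdash top -> negI vdash neg ->
  negA vdash neg -> negPP vdash conj neg -> forall phi chi,
  Cn_full vdash (set2 (neg phi) chi) <-> vdash (set1 chi) phi.
Proof.
  intros Htop HnI [_ Hexcl] [_ [Hconj HnP]] phi chi. split.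
  - intros Hfull. set (c := conj chi (neg phi)).
    assert (Hc : vdash (set1 top) (neg c)).
    { apply neg_swap; [exact HnI |].
      apply (vdash_cut2 (a := chi) (b := neg phi)).
      - apply (Hconj chi (neg phi)), vdash_set2l.
      - apply (Hconj chi (neg phi)), vdash_set2r.
      - apply vdash_set2C, Hfull. }
    assert (Hchi : vdash (set1 chi) (neg c)).
    { apply (vdash_mono (G := @set_empty Fm)); [intros x [] |].
      apply Htop, Hc. }
    apply (vdash_cut1 (vdash_cut2 (vdash_set1 chi) Hchi (HnP chi (neg phi)))).
    apply (proj2 HnI phi), vdash_set1.
  - intros Hchi. apply (Cn_full_cut2 (a := phi) (b := neg phi)).
    + apply (vdash_cut1 (vdash_set2r _ _) Hchi).
    + apply vdash_set2l.
    + apply Hexcl.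
Qed.

End Negation.

Section NormativeSystem.
Variable N : nsys Fm.

Lemma PNc_iff a phi :
  PNc vdash N a phi <-> exists psi, N a psi /\ Cn_full vdash (set2 phi psi).
Proof.
  unfold PNc, PN. split.
  - intros H. apply NNPP. intros Hnone. apply H. intros psi Hpsi Hfull.
    apply Hnone. exists psi. split; assumption.
  - intros [psi [Hpsi Hfull]] H. exact (H psi Hpsi Hfull).
Qed.

Lemma PNc_bot_iff bot a : botP vdash bot ->
  (PNc vdash N a bot <-> exists psi, N a psi).
Proof.
  intros Hbot. rewrite PNc_iff. split.
  - intros [psi [Hpsi _]]. exists psi. exact Hpsi.
  - intros [psi Hpsi]. exists psi. split; [exact Hpsi |].
    intros x. apply (vdash_mono (G := set1 bot)); [intros z Hz; left; exact Hz |].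
    apply Hbot.
Qed.

Lemma N_top_iff top a : topW vdash top -> cl_WO vdash N ->
  (N a top <-> exists psi, N a psi).
Proof.
  intros Htop Hwo. split.
  - intros H. exists top. exact H.
  - intros [psi Hpsi]. exact (Hwo a psi top Hpsi (Htop psi)).
Qed.

Lemma PNc_top_iff top a : topW vdash top ->
  (PNc vdash N a top <-> exists psi, N a psi /\ Cn_full vdash (set1 psi)).
Proof.
  intros Htop. rewrite PNc_iff. split.
  - intros [psi [Hpsi Hfull]]. exists psi. split; [exact Hpsi |].
    exact (Cn_full_cut2 (Htop psi) (vdash_set1 psi) Hfull).
  - intros [psi [Hpsi Hfull]]. exists psi. split; [exact Hpsi |].
    apply Cn_full_set2C. intros x.
    apply (vdash_mono (G := set1 psi)); [intros z Hz; left; exact Hz |].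
    apply Hfull.
Qed.

Lemma N_bot_iff bot a : botP vdash bot -> cl_WO vdash N ->
  (N a bot <-> exists psi, N a psi /\ Cn_full vdash (set1 psi)).
Proof.
  intros Hbot Hwo. split.
  - intros H. exists bot. split; assumption.
  - intros [psi [Hpsi Hfull]]. exact (Hwo a psi bot Hpsi (Hfull bot)).
Qed.

Lemma PNc_WO : clR_WO vdash (PNc vdash N).
Proof.
  intros a phi psi H Hphi. rewrite PNc_iff in *. destruct H as [chi [Hchi Hfull]].
  exists chi. split; [exact Hchi |].
  exact (Cn_full_cut2 (vdash_cut1 (vdash_set2l phi chi) Hphi) (vdash_set2r _ _) Hfull).
Qed.

Lemma PNc_SI : cl_SI vdash N -> clR_SI vdash (PNc vdash N).
Proof.
  intros Hsi a b phi H Hab. rewrite PNc_iff in *. destruct H as [chi [Hchi Hfull]].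
  exists chi. split; [exact (Hsi b a chi Hchi Hab) | exact Hfull].
Qed.

Lemma PNc_AND conj disj : andP vdash conj -> orS vdash disj ->
  cl_AND conj N -> clR_AND disj (PNc vdash N).
Proof.
  intros Hconj Hdisj Hand a phi psi H1 H2. rewrite PNc_iff in *.
  destruct H1 as [c1 [Hc1 Hfull1]], H2 as [c2 [Hc2 Hfull2]].
  exists (conj c1 c2). split; [exact (Hand a c1 c2 Hc1 Hc2) |].
  apply Cn_full_set2C, Cn_full_disj; [exact Hdisj | |]; apply Cn_full_set2C.
  - refine (Cn_full_cut2 (vdash_set2l _ _) _ Hfull1).
    apply (vdash_cut1 (vdash_set2r phi _)), (Hconj c1 c2), vdash_set2l.
  - refine (Cn_full_cut2 (vdash_set2l _ _) _ Hfull2).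
    apply (vdash_cut1 (vdash_set2r psi _)), (Hconj c1 c2), vdash_set2r.
Qed.

Lemma PNc_OR disj : orS vdash disj -> cl_OR disj N -> cl_WO vdash N ->
  clR_OR disj (PNc vdash N).
Proof.
  intros Hdisj Hor Hwo a b phi H1 H2. rewrite PNc_iff in *.
  destruct H1 as [c1 [Hc1 Hfull1]], H2 as [c2 [Hc2 Hfull2]].
  exists (disj c1 c2). split.
  - destruct (orS_intro Hdisj c1 c2) as [Hl Hr].
    exact (Hor a b _ (Hwo a c1 _ Hc1 Hl) (Hwo b c2 _ Hc2 Hr)).
  - apply Cn_full_disj; assumption.
Qed.

Lemma PNc_CT conj : cl_CT conj N -> clR_CT conj N (PNc vdash N).
Proof.
  intros Hct a phi psi Hphi H. rewrite PNc_iff in *. destruct H as [chi [Hchi Hfull]].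
  exists chi. split; [exact (Hct a phi chi Hphi Hchi) | exact Hfull].
Qed.

Section Duality.
Variables (top : Fm) (neg : Fm -> Fm) (conj : Fm -> Fm -> Fm).
Hypotheses (Htop : topP vdash top) (HnI : negI vdash neg) (HnA : negA vdash neg)
  (HnP : negPP vdash conj neg) (Hwo : cl_WO vdash N).

Lemma PNc_neg_iff a phi : PNc vdash N a (neg phi) <-> N a phi.
Proof.
  rewrite PNc_iff. split.
  - intros [chi [Hchi Hfull]].
    exact (Hwo Hchi (proj1 (inconsistent_neg_iff Htop HnI HnA HnP _ _) Hfull)).
  - intros Hphi. exists phi. split; [exact Hphi |].
    apply (inconsistent_neg_iff Htop HnI HnA HnP), vdash_set1.
Qed.

Lemma PNc_iff_neg a phi : PNc vdash N a phi <-> N a (neg phi).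
Proof.
  rewrite <- PNc_neg_iff. split; intros H; eapply PNc_WO; try exact H;
    apply (proj2 HnI phi), vdash_set1.
Qed.

Lemma SI_iff_PNc_SI : cl_SI vdash N <-> clR_SI vdash (PNc vdash N).
Proof.
  split; [exact PNc_SI |].
  intros H a b phi Hphi Hba. apply PNc_neg_iff.
  exact (H b a (neg phi) (proj2 (PNc_neg_iff a phi) Hphi) Hba).
Qed.

Lemma AND_iff_PNc_AND disj : orP vdash disj ->
  (cl_AND conj N <-> clR_AND disj (PNc vdash N)).
Proof.
  intros Hdisj. assert (Hconj : andP vdash conj) by apply HnP. split.
  - intros Hand a phi psi H1 H2. rewrite PNc_iff_neg in *.
    apply (Hwo (Hand _ _ _ H1 H2)).
    exact (conj_neg_derives_neg_disj HnI Hconj Hdisj phi psi).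
  - intros H a phi psi H1 H2. apply PNc_neg_iff.
    rewrite <- PNc_neg_iff in H1, H2.
    apply (PNc_WO (H _ _ _ H1 H2)).
    exact (neg_conj_derives_disj_neg HnI Hconj Hdisj phi psi).
Qed.

Lemma OR_iff_PNc_OR disj : cl_OR disj N <-> clR_OR disj (PNc vdash N).
Proof.
  split; intros H a b phi H1 H2.
  - rewrite PNc_iff_neg in *. exact (H _ _ _ H1 H2).
  - rewrite <- PNc_neg_iff in *. exact (H _ _ _ H1 H2).
Qed.

Lemma CT_iff_PNc_CT : cl_CT conj N <-> clR_CT conj N (PNc vdash N).
Proof.
  split; [exact (PNc_CT (conj := conj)) |].
  intros H a phi psi Hphi Hpsi. apply PNc_neg_iff. rewrite <- PNc_neg_iff in Hpsi.
  exact (H _ _ _ Hphi Hpsi).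
Qed.

End Duality.
End NormativeSystem.
End Consequence.

Theorem proposition4p5 (Fm : Type) (vdash : fset Fm -> Fm -> Prop)
  (HL : is_logic vdash) (N : nsys Fm) :
  (* 1 *)
  (forall bot top : Fm, botP vdash bot -> topW vdash top ->
     (clR_top top bot (PNc vdash N) <-> exists psi, N top psi)) /\
  (* 2 *)
  (forall bot top : Fm, botP vdash bot -> topW vdash top -> cl_WO vdash N ->
     (cl_top top N <-> clR_top top bot (PNc vdash N))) /\
  (* 3 *)
  (forall bot top : Fm, botP vdash bot -> topW vdash top ->
     (clR_bot bot top (PNc vdash N) <->
      exists psi, N bot psi /\ Cn_full vdash (set1 psi))) /\
  (* 4 *)
  (forall bot top : Fm, botP vdash bot -> topW vdash top -> cl_WO vdash N ->
     (cl_bot bot N <-> clR_bot bot top (PNc vdash N))) /\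
  (* 5 *)
  clR_WO vdash (PNc vdash N) /\
  (* 6 *)
  (cl_SI vdash N -> clR_SI vdash (PNc vdash N)) /\
  (* 7 *)
  (forall (bot top : Fm) (neg : Fm -> Fm) (conj : Fm -> Fm -> Fm),
     botP vdash bot -> topP vdash top -> negI vdash neg -> negA vdash neg ->
     negPP vdash conj neg -> cl_WO vdash N ->
     (cl_SI vdash N <-> clR_SI vdash (PNc vdash N))) /\
  (* 8 *)
  (forall conj disj : Fm -> Fm -> Fm,
     andP vdash conj -> orS vdash disj -> cl_AND conj N ->
     clR_AND disj (PNc vdash N)) /\
  (* 9 *)
  (forall (bot top : Fm) (neg : Fm -> Fm) (conj disj : Fm -> Fm -> Fm),
     botP vdash bot -> topP vdash top -> negI vdash neg -> negA vdash neg ->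
     negPP vdash conj neg -> orP vdash disj -> cl_WO vdash N ->
     (cl_AND conj N <-> clR_AND disj (PNc vdash N))) /\
  (* 10 *)
  (forall disj : Fm -> Fm -> Fm,
     orS vdash disj -> cl_OR disj N -> cl_WO vdash N ->
     clR_OR disj (PNc vdash N)) /\
  (* 11 *)
  (forall (bot top : Fm) (neg : Fm -> Fm) (conj disj : Fm -> Fm -> Fm),
     botP vdash bot -> topP vdash top -> negI vdash neg -> negA vdash neg ->
     negPP vdash conj neg -> orP vdash disj -> cl_WO vdash N ->
     (cl_OR disj N <-> clR_OR disj (PNc vdash N))) /\
  (* 12 *)
  (forall conj : Fm -> Fm -> Fm,
     andP vdash conj -> cl_CT conj N -> clR_CT conj N (PNc vdash N)) /\
  (* 13 *)
  (forall (bot top : Fm) (neg : Fm -> Fm) (conj : Fm -> Fm -> Fm),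
     botP vdash bot -> topP vdash top -> negI vdash neg -> negA vdash neg ->
     negPP vdash conj neg -> cl_WO vdash N ->
     (cl_CT conj N <-> clR_CT conj N (PNc vdash N))).
Proof.
  (* ⊥_P is superfluous in items 3, 7, 9, 11 and 13, and ⊤_W in item 1. *)
  split; [intros bot top Hbot _; exact (PNc_bot_iff HL N top Hbot) |].
  split.
  { intros bot top Hbot Htop Hwo. unfold cl_top, clR_top.
    rewrite (N_top_iff top Htop Hwo). symmetry. exact (PNc_bot_iff HL N top Hbot). }
  split; [intros bot top _ Htop; exact (PNc_top_iff HL N bot Htop) |].
  split.
  { intros bot top Hbot Htop Hwo. unfold cl_bot, clR_bot.
    rewrite (N_bot_iff bot Hbot Hwo). symmetry. exact (PNc_top_iff HL N bot Htop). }
  split; [apply (PNc_WO HL) |].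
  split; [apply PNc_SI |].
  split; [intros bot top neg conj _ Htop HnI HnA HnP Hwo;
          exact (SI_iff_PNc_SI HL Htop HnI HnA HnP Hwo) |].
  split; [apply (PNc_AND HL) |].
  split; [intros bot top neg conj disj _ Htop HnI HnA HnP Hdisj Hwo;
          exact (AND_iff_PNc_AND HL Htop HnI HnA HnP Hwo Hdisj) |].
  split; [apply (PNc_OR HL) |].
  split; [intros bot top neg conj disj _ Htop HnI HnA HnP _ Hwo;
          exact (OR_iff_PNc_OR HL Htop HnI HnA HnP Hwo disj) |].
  split; [intros conj _; apply PNc_CT |].
  intros bot top neg conj _ Htop HnI HnA HnP Hwo.
  exact (CT_iff_PNc_CT HL Htop HnI HnA HnP Hwo).
Qed.
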